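(* Let $f:(k+1)^V\to\mathbb{R}_{\ge0}$ be non-negative, monotone and $k$-submodular with all marginal values $\Delta_{e,j}f(S)\in[0,1]$, and let $F$ be its multilinear extension. Let $x\in\mathcal P$, $\mu_0=F(x)$, and let $R=(R_1,\dots,R_k)\in(k+1)^V$ be the random output of randomized swap rounding applied to $x$ (with any decomposition of $\bar x$ into bases). Then $\mathbb{E}[f(R)]\ge\mu_0$, and for every $\delta>0$, $$\Pr[f(R)\le(1-\delta)\mu_0]\le e^{-\mu_0\delta^2/8}.$$
   Context: Let $V=[n]=\{1,\dots,n\}$ and let $k\ge 1$ be an integer. Write $(k+1)^V$ for the set of $k$-tuples $S=(S_1,\dots,S_k)$ of pairwise disjoint subsets of $V$. For $S,T\in(k+1)^V$ let $S\sqcap T=(S_1\cap T_1,\dots,S_k\cap T_k)$ and let $S\sqcup T$ be the tuple whose $j$-th component is $(S_j\cup T_j)\setminus\bigcup_{l\neq j}(S_l\cup T_l)$. A function $f:(k+1)^V\to\mathbb{R}$ is $k$-submodular if $f(S)+f(T)\ge f(S\sqcap T)+f(S\sqcup T)$ for all $S,T\in(k+1)^V$. Write $S\preceq T$ if $S_j\subseteq T_j$ for all $j$; $f$ is monotone if $S\preceq T$ implies $f(S)\le f(T)$. For $e\notin\bigcup_l S_l$ and $j\in[k]$, $\Delta_{e,j}f(S)=f(S_1,\dots,S_{j-1},S_j\cup\{e\},S_{j+1},\dots,S_k)-f(S)$. Let $\mathcal P=\{x\in[0,1]^{n\times k}:\sum_{j=1}^k x_{i,j}\le 1\ \forall i\in[n]\}$.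 The multilinear extension of $f$ is the polynomial $F(x)=\sum_{S\in(k+1)^V} f(S_1,\dots,S_k)\Big(\prod_{j\in[k]}\prod_{i\in S_j}x_{i,j}\Big)\prod_{i\in V\setminus\bigcup_j S_j}\Big(1-\sum_{j=1}^k x_{i,j}\Big)$, considered on $\mathcal P$. Randomized swap rounding: let $E=[n]\times\{0,1,\dots,k\}$ and call $C\subseteq E$ a base if it contains exactly one element of each row $\{i\}\times\{0,\dots,k\}$ (bases of a partition matroid). For $x\in\mathcal P$ let $\bar x\in[0,1]^E$ be given by $\bar x_{i,j}=x_{i,j}$ for $j\ge1$ and $\bar x_{i,0}=1-\sum_{j\ge1}x_{i,j}$. Write $\bar x=\sum_{l=1}^m\beta_l\mathbf 1_{B_l}$ with $\beta_l>0$, $\sum_l\beta_l=1$, $B_l$ bases. Set $C_1=B_1$, $\gamma_1=\beta_1$. For $l=1,\dots,m-1$, merge $C_l$ (weight $\gamma_l$) with $B_{l+1}$ (weight $\beta_{l+1}$): with $C=C_l$, $B=B_{l+1}$, while $C\neq B$ pick a row $i$ where they differ, with $c\in C\setminus B$ and $b\in B\setminus C$ the elements of row $i$; with probability $\gamma_l/(\gamma_l+\beta_{l+1})$ replace $B$ by $B-b+c$, otherwise replace $C$ by $C-c+b$ (the choice of row may depend on the history). When $C=B$, set $C_{l+1}=C$ and $\gamma_{l+1}=\gamma_l+\beta_{l+1}$. The output is $R=(R_1,\dots,R_k)$ with $R_j=\{i:(i,j)\in C_m\}$. *)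

From HB Require Import structures.
From mathcomp Require Import all_boot all_order all_algebra.
From mathcomp Require Import reals sequences exp.
Set Implicit Arguments. Unset Strict Implicit. Unset Printing Implicit Defensive.
Import Order.TTheory GRing.Theory Num.Theory.
Local Open Scope ring_scope.

(* V = [n] is encoded as 'I_n.  An element S = (S_1,...,S_k) of
   (k+1)^V (k-tuple of pairwise disjoint subsets of V) is encoded by the map
   s : 'I_n -> 'I_k.+1 with  s i = 0 if i is in no S_j, and s i = j (as the
   ordinal lift ord0 j', j' : 'I_k, i.e. value j'+1) if i \in S_{j'+1}. *)
Definition orth (n k : nat) := {ffun 'I_n -> 'I_k.+1}.

(* the j-th component S_j (j : 'I_k, meaning component j+1) *)
Definition comp n k (S : orth n k) (j : 'I_k) : {set 'I_n} :=
  [set i | S i == lift ord0 j].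

Definition unassigned n k (S : orth n k) : {set 'I_n} := [set i | S i == ord0].

Definition omeet n k (S T : orth n k) : orth n k :=
  [ffun i => if S i == T i then S i else ord0].

(* S ⊔ T : j-th comp = (S_j ∪ T_j) \ U_{l<>j} (S_l ∪ T_l) *)
Definition ojoin n k (S T : orth n k) : orth n k :=
  [ffun i => if S i == ord0 then T i
             else if T i == ord0 then S i
             else if S i == T i then S i else ord0].

Definition k_submodular (R : realType) n k (f : orth n k -> R) : Prop :=
  forall S T : orth n k, f (omeet S T) + f (ojoin S T) <= f S + f T.

Definition ole n k (S T : orth n k) : Prop :=
  forall j : 'I_k, comp S j \subset comp T j.

Definition monotone (R : realType) n k (f : orth n k -> R) : Prop :=
  forall S T : orth n k, ole S T -> f S <= f T.

Definition upd n k (S : orth n k) (e : 'I_n) (v : 'I_k.+1) : orth n k :=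
  [ffun i => if i == e then v else S i].

(* Δ_{e,j} f(S), defined for e unassigned in S *)
Definition marginal (R : realType) n k (f : orth n k -> R) (e : 'I_n) (j : 'I_k)
  (S : orth n k) : R := f (upd S e (lift ord0 j)) - f S.

Definition in_P (R : realType) n k (x : 'M[R]_(n, k)) : Prop :=
  (forall i j, 0 <= x i j <= 1) /\ (forall i, \sum_(j < k) x i j <= 1).

Definition multilinear_ext (R : realType) n k (f : orth n k -> R)
  (x : 'M[R]_(n, k)) : R :=
  \sum_(S : orth n k)
     f S * ((\prod_(j < k) \prod_(i in comp S j) x i j) *
            \prod_(i in unassigned S) (1 - \sum_(j < k) x i j)).

(* E = [n] x {0..k}; a base (one element per row) is encoded as a map
   'I_n -> 'I_k.+1 (row i contains (i, C i)); it is thus also of type orth n k,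
   and the output R_j = {i : (i,j) in C_m} is exactly this map. *)
Definition base n k := orth n k.

Definition xbar (R : realType) n k (x : 'M[R]_(n, k)) (i : 'I_n) (c : 'I_k.+1) : R :=
  match unlift ord0 c with
  | Some j => x i j
  | None => 1 - \sum_(j < k) x i j
  end.

Definition is_decomposition (R : realType) n k (x : 'M[R]_(n, k))
  (dec : seq (R * base n k)) : Prop :=
  [/\ dec != [::],
      all (fun p => 0 < p.1) dec,
      \sum_(p <- dec) p.1 = 1 &
      forall i c, xbar x i c = \sum_(p <- dec) p.1 * (p.2 i == c)%:R].

(* finitely supported probability distributions over outcomes, given by their
   mass functions *)
Definition dist (R : realType) n k := {ffun orth n k -> R}.
Definition dirac (R : realType) n k (C : orth n k) : dist R n k :=
  [ffun S => (S == C)%:R].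
Definition mix (R : realType) n k (p : R) (d1 d2 : dist R n k) : dist R n k :=
  [ffun S => p * d1 S + (1 - p) * d2 S].

(* swap_idle g C rest d : the current merged base is C with weight g, the
   bases still to be merged are rest; d is a possible distribution of the final
   output.
   swap_merging g C b B rest d : currently merging C (weight g) with B (weight b).
   Each swap step picks ANY row i on which C and B differ (independently at each
   node of the execution tree, hence allowing arbitrary history-dependent row
   choices); with prob. g/(g+b) B := B - b + c, otherwise C := C - c + b. *)
Inductive swap_idle (R : realType) (n k : nat) :
    R -> base n k -> seq (R * base n k) -> dist R n k -> Prop :=
| swap_done (g : R) (C : base n k) : swap_idle g C [::] (dirac R C)
| swap_next (g : R) (C : base n k) (b : R) (B : base n k)
    (rest : seq (R * base n k)) (d : dist R n k) :
    swap_merging g C b B rest d -> swap_idle g C ((b, B) :: rest) d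
with swap_merging (R : realType) (n k : nat) :
    R -> base n k -> R -> base n k -> seq (R * base n k) -> dist R n k -> Prop :=
| swap_merged (g : R) (C : base n k) (b : R) (rest : seq (R * base n k))
    (d : dist R n k) :
    swap_idle (g + b) C rest d -> swap_merging g C b C rest d
| swap_step (g : R) (C : base n k) (b : R) (B : base n k)
    (rest : seq (R * base n k)) (i : 'I_n) (d1 d2 : dist R n k) :
    C i != B i ->
    swap_merging g C b (upd B i (C i)) rest d1 ->
    swap_merging g (upd C i (B i)) b B rest d2 ->
    swap_merging g C b B rest (mix (g / (g + b)) d1 d2).

Definition swap_rounding_dist (R : realType) n k (dec : seq (R * base n k))
  (d : dist R n k) : Prop :=
  match dec with
  | [::] => False
  | (b1, B1) :: rest => swap_idle b1 B1 rest d
  end.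

Definition expectation (R : realType) n k (d : dist R n k) (g : orth n k -> R) : R :=
  \sum_(S : orth n k) d S * g S.

Definition prob (R : realType) n k (d : dist R n k) (P : pred (orth n k)) : R :=
  \sum_(S : orth n k | P S) d S.

From HB Require Import structures.
From mathcomp Require Import all_boot all_order all_algebra.
From mathcomp Require Import reals sequences exp.
From mathcomp Require Import ring lra.
Set Implicit Arguments. Unset Strict Implicit. Unset Printing Implicit Defensive.
Import Order.TTheory GRing.Theory Num.Theory.
Local Open Scope ring_scope.

(* For a partition matroid, randomized swap rounding outputs exactly the
   product distribution in which row i independently takes value c with
   probability xbar i c.  Indeed, writing prodE g y for the expectation of g
   when row i is drawn from the weights y i, prodE g y is affine in each row,
   and a swap step on row i splits the current row weights of that row into a
   convex combination of the row weights of the two branches, leaving all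
   other rows untouched; at the end a single base of weight 1 remains.
   Since the multilinear extension is prodE f xbar, this gives the expectation
   claim.  For the tail bound we control the moment generating function
   E[exp(-lam f)] of the product distribution by fixing the rows one at a
   time: k-submodularity gives diminishing returns, so the conditional
   expectations of f increase by at most the (<= 1) marginal value of f, and
   a one-row convexity estimate for expR propagates the bound
   E[exp(-lam f)] <= exp(-(lam - lam^2) E f).  Markov's inequality with
   lam = delta/2 then yields the Chernoff-type bound. *)

Section ProductExpectation.
Variables (R : realType) (n k : nat).
Implicit Types (g : orth n k -> R) (y : 'I_n -> 'I_k.+1 -> R) (C : orth n k).

(* Expectation of g when row i independently takes value c with weight y i c;
   as a polynomial in y it is affine in each row separately. *)
Definition prodE g y : R := \sum_(S : orth n k) g S * \prod_(i < n) y i (S i).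

Lemma eq_prodE g y y' : (forall i c, y i c = y' i c) -> prodE g y = prodE g y'.
Proof.
by move=> yy'; apply: eq_bigr => S _; congr (_ * _); apply: eq_bigr => i _.
Qed.

Definition fix_row y (t : 'I_n) (c : 'I_k.+1) : 'I_n -> 'I_k.+1 -> R :=
  fun i c' => if i == t then (c == c')%:R else y i c'.

Lemma prodE_condition g y t :
  prodE g y = \sum_(c < k.+1) y t c * prodE g (fix_row y t c).
Proof.
rewrite /prodE; under [RHS]eq_bigr do rewrite mulr_sumr.
rewrite exchange_big /=; apply: eq_bigr => S _.
rewrite (bigD1 t (P := predT)) //=.
under [RHS]eq_bigr do rewrite (bigD1 t (P := predT)) //= /fix_row eqxx.
have other_rows c : \prod_(i < n | i != t) (if i == t then (c == S i)%:R
                                             else y i (S i))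
                    = \prod_(i < n | i != t) y i (S i).
  by apply: eq_bigr => i /negbTE ->.
under [RHS]eq_bigr do rewrite other_rows.
rewrite [RHS](bigD1 (S t) (P := predT)) //= eqxx [X in _ = _ + X]big1 ?addr0.
  by rewrite mul1r; ring.
by move=> c /negbTE ->; rewrite mul0r mulr0 mulr0.
Qed.

Lemma prodE_mix_row g (i : 'I_n) y y1 y2 (p : R) :
  (forall j, j != i -> forall c, y1 j c = y j c /\ y2 j c = y j c) ->
  (forall c, y i c = p * y1 i c + (1 - p) * y2 i c) ->
  prodE g y = p * prodE g y1 + (1 - p) * prodE g y2.
Proof.
move=> same_rows mix_i.
rewrite (prodE_condition g y i) (prodE_condition g y1 i) (prodE_condition g y2 i).
have fixed1 c : prodE g (fix_row y1 i c) = prodE g (fix_row y i c).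
  apply: eq_prodE => j c'; rewrite /fix_row; case: eqP => // /eqP ji.
  by case: (same_rows j ji c').
have fixed2 c : prodE g (fix_row y2 i c) = prodE g (fix_row y i c).
  apply: eq_prodE => j c'; rewrite /fix_row; case: eqP => // /eqP ji.
  by case: (same_rows j ji c').
under [in RHS]eq_bigr do rewrite fixed1.
under [X in _ = _ + _ * X]eq_bigr do rewrite fixed2.
rewrite !mulr_sumr -big_split /=; apply: eq_bigr => c _; rewrite mix_i; ring.
Qed.

Lemma prodE_point g C : prodE g (fun i c => (C i == c)%:R) = g C.
Proof.
rewrite /prodE (bigD1 C (P := predT)) //= [X in _ + X]big1 ?addr0.
  by rewrite big1 ?mulr1 // => i _; rewrite eqxx.
move=> S SC.
have [i CSi] : exists i, C i != S i.
  apply/existsP; apply: contraNT SC => /existsPn CS.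
  by apply/eqP/ffunP => i; move: (CS i); rewrite negbK => /eqP.
by rewrite (bigD1 i) //= (negbTE CSi) mul0r mulr0.
Qed.

Lemma prodE_ge0 g y :
  (forall S, 0 <= g S) -> (forall i c, 0 <= y i c) -> 0 <= prodE g y.
Proof.
move=> g0 y0; apply: sumr_ge0 => S _.
by rewrite mulr_ge0 // prodr_ge0.
Qed.

End ProductExpectation.

Section RowWeights.
Variables (R : realType) (n k : nat).
Implicit Types (x : 'M[R]_(n, k)) (f : orth n k -> R).

Lemma xbar_ge0 x i c : in_P x -> 0 <= xbar x i c.
Proof.
case=> entries rows; rewrite /xbar; case: (unliftP ord0 c) => [j _|_].
  by case/andP: (entries i j).
by rewrite subr_ge0.
Qed.

Lemma xbar_sum x i : \sum_c xbar x i c = 1.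
Proof.
rewrite big_ord_recl /xbar unlift_none.
under [X in _ + X = _]eq_bigr do rewrite liftK.
by rewrite subrK.
Qed.

Lemma multilinear_ext_prodE f x : multilinear_ext f x = prodE f (xbar x).
Proof.
rewrite /multilinear_ext /prodE; apply: eq_bigr => S _; congr (_ * _).
rewrite [RHS](partition_big (fun i : 'I_n => S i) (fun _ => true)) //=.
rewrite big_ord_recl mulrC; congr (_ * _).
  apply: eq_big => [i|i]; first by rewrite in_set.
  by rewrite in_set => /eqP Si; rewrite Si /xbar unlift_none.
apply: eq_bigr => j _; apply: eq_big => [i|i]; first by rewrite in_set.
by rewrite in_set => /eqP Si; rewrite Si /xbar liftK.
Qed.

End RowWeights.

Scheme swap_idle_min := Minimality for swap_idle Sort Prop
with swap_merging_min := Minimality for swap_merging Sort Prop.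

Section SwapRounding.
Variables (R : realType) (n k : nat).
Implicit Types (d : dist R n k) (h : orth n k -> R) (l : seq (R * base n k)).

Definition row_weights l (i : 'I_n) (c : 'I_k.+1) : R :=
  \sum_(p <- l) p.1 * (p.2 i == c)%:R.

Lemma expectation_dirac (C : orth n k) h : expectation (dirac R C) h = h C.
Proof.
rewrite /expectation (bigD1 C (P := predT)) //= ffunE eqxx mul1r big1 ?addr0 //.
by move=> S /negbTE SC; rewrite ffunE SC mul0r.
Qed.

Lemma expectation_mix (p : R) d1 d2 h :
  expectation (mix p d1 d2) h = p * expectation d1 h + (1 - p) * expectation d2 h.
Proof.
by rewrite /expectation !mulr_sumr -big_split /=; apply: eq_bigr => S _; rewrite ffunE; ring.
Qed.

(* Invariant of the rounding process: from any state whose weights are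
   positive and sum to 1, the output is a (nonnegative) distribution equal to
   the product distribution of the current row weights. *)
Definition product_output g (C : base n k) l d : Prop :=
  0 < g -> all (fun p => 0 < p.1) l -> g + \sum_(p <- l) p.1 = 1 ->
  (forall S, 0 <= d S) /\
  (forall h, expectation d h = prodE h (row_weights ((g, C) :: l))).

Definition merging_product_output g (C : base n k) b (B : base n k) l d : Prop :=
  0 < g -> 0 < b -> all (fun p => 0 < p.1) l -> g + b + \sum_(p <- l) p.1 = 1 ->
  (forall S, 0 <= d S) /\
  (forall h, expectation d h = prodE h (row_weights ((g, C) :: (b, B) :: l))).

Lemma swap_step_mixture g b (C B : base n k) l h (i : 'I_n) :
  0 < g + b ->
  prodE h (row_weights ((g, C) :: (b, B) :: l)) =
    g / (g + b) * prodE h (row_weights ((g, C) :: (b, upd B i (C i)) :: l))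
    + (1 - g / (g + b)) * prodE h (row_weights ((g, upd C i (B i)) :: (b, B) :: l)).
Proof.
move=> gb_gt0; apply: (@prodE_mix_row _ _ _ h i).
  by move=> j ji c; rewrite /row_weights !big_cons /= !ffunE (negbTE ji).
move=> c; rewrite /row_weights !big_cons /= !ffunE eqxx.
by field; rewrite gt_eqF.
Qed.

Lemma swap_idle_product g (C : base n k) l d :
  swap_idle g C l d -> product_output g C l d.
Proof.
apply: (@swap_idle_min R n k product_output merging_product_output).
- move=> g0 C0 _ _; rewrite big_nil addr0 => g1; split.
    by move=> S; rewrite ffunE ler0n.
  move=> h; rewrite expectation_dirac -[LHS](prodE_point h C0).
  by apply: eq_prodE => i c; rewrite /row_weights big_cons big_nil addr0 g1 mul1r.
- move=> g0 C0 b B l0 d0 _ IH g0_gt0 /andP[b_gt0 l_pos] sum1.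
  by apply: IH => //; rewrite -addrA -sum1 big_cons.
- move=> g0 C0 b l0 d0 _ IH g0_gt0 b_gt0 l_pos sum1.
  have [d0_ge0 d0E] := IH (addr_gt0 g0_gt0 b_gt0) l_pos sum1.
  split => // h; rewrite d0E; apply: eq_prodE => i c.
  by rewrite /row_weights !big_cons /=; ring.
- move=> g0 C0 b B l0 i d1 d2 _ _ IH1 _ IH2 g0_gt0 b_gt0 l_pos sum1.
  have [d1_ge0 d1E] := IH1 g0_gt0 b_gt0 l_pos sum1.
  have [d2_ge0 d2E] := IH2 g0_gt0 b_gt0 l_pos sum1.
  have gb_gt0 : 0 < g0 + b by exact: addr_gt0.
  have p_ge0 : 0 <= g0 / (g0 + b) by rewrite divr_ge0 // ltW.
  have q_ge0 : 0 <= 1 - g0 / (g0 + b).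
    by rewrite subr_ge0 ler_pdivrMr // mul1r lerDl ltW.
  split; first by move=> S; rewrite ffunE addr_ge0 // mulr_ge0.
  by move=> h; rewrite expectation_mix d1E d2E (@swap_step_mixture g0 b C0 B l0 h i).
Qed.

Lemma swap_rounding_product (x : 'M[R]_(n, k)) dec d :
  is_decomposition x dec -> swap_rounding_dist dec d ->
  (forall S, 0 <= d S) /\ (forall h, expectation d h = prodE h (xbar x)).
Proof.
case: dec => [//|[b1 B1] rest] [_ /andP[b1_gt0 rest_pos] sum1 xbarE] /= sw.
have sum1' : b1 + \sum_(p <- rest) p.1 = 1 by rewrite -sum1 big_cons.
have [d_ge0 dE] := swap_idle_product sw b1_gt0 rest_pos sum1'.
by split => // h; rewrite dE; apply: eq_prodE => i c; rewrite xbarE.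
Qed.

End SwapRounding.

Section ExponentialEstimates.
Variable R : realType.

Lemma expR_chord (lam cc u : R) :
  0 <= lam -> 0 <= cc -> cc * (1 + lam) = lam -> 0 <= u -> u <= 1 ->
  expR (- (lam * u)) <= 1 - cc * u.
Proof.
move=> lam_ge0 cc_ge0 ccE u_ge0 u_le1.
have inv : expR (- (lam * u)) * expR (lam * u) = 1 by rewrite -expRD addNr expR0.
have pos : 0 < expR (- (lam * u)) := expR_gt0 _.
have tangent : 1 + lam * u <= expR (lam * u) := expR_ge1Dx _.
have cc_le1 : cc <= 1 by nra.
have chord_ge0 : 0 <= 1 - cc * u by nra.
have chord_inv : 1 <= (1 - cc * u) * (1 + lam * u).
  have : 0 <= cc * lam * u * (1 - u) by rewrite !mulr_ge0 // subr_ge0.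
  nra.
have : (1 - cc * u) * (1 + lam * u) <= (1 - cc * u) * expR (lam * u).
  exact: ler_wpM2l.
nra.
Qed.

Lemma expR_average_step k (p H Fv : 'I_k.+1 -> R) (h0 f0 lam cc : R) :
  0 <= lam -> 0 <= cc -> cc * (1 + lam) = lam ->
  (forall c, 0 <= p c) -> \sum_c p c = 1 ->
  (forall c, 0 <= H c - h0) -> (forall c, H c - h0 <= Fv c - f0) ->
  (forall c, Fv c - f0 <= 1) ->
  \sum_c p c * expR (- cc * H c + (cc - lam) * Fv c)
    <= expR (- cc * (\sum_c p c * H c) + (cc - lam) * f0).
Proof.
move=> lam_ge0 cc_ge0 ccE p_ge0 p_sum1 H_ge H_le_F F_le.
set E0 := expR (- cc * h0 + (cc - lam) * f0).
have E0_gt0 : 0 < E0 := expR_gt0 _.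
have cc_le_lam : cc <= lam by nra.
have pointwise c : expR (- cc * H c + (cc - lam) * Fv c)
                   <= E0 * (1 - cc * (H c - h0)).
  have -> : - cc * H c + (cc - lam) * Fv c = (- cc * h0 + (cc - lam) * f0)
          + (- cc * (H c - h0) + (cc - lam) * (Fv c - f0)) by ring.
  rewrite expRD; apply: ler_wpM2l; first exact: ltW.
  apply: le_trans (expR_chord lam_ge0 cc_ge0 ccE (H_ge c) (le_trans (H_le_F c) (F_le c))).
  by rewrite ler_expR; have := H_le_F c; have := H_ge c; nra.
apply: le_trans (_ : \sum_c p c * (E0 * (1 - cc * (H c - h0))) <= _).
  by apply: ler_sum => c _; apply: ler_wpM2l.
rewrite (eq_bigr (fun c => E0 * p c - E0 * cc * (p c * H c) + E0 * cc * h0 * p c));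
  last by move=> c _; ring.
rewrite big_split sumrB /= -!mulr_sumr p_sum1.
have -> : - cc * (\sum_c p c * H c) + (cc - lam) * f0 =
          (- cc * h0 + (cc - lam) * f0) + (- (cc * (\sum_c p c * H c - h0))) by ring.
rewrite expRD -/E0.
have := expR_ge1Dx (- (cc * (\sum_c p c * H c - h0))).
set X := expR _ => tangent.
have : E0 * (1 - cc * (\sum_c p c * H c - h0)) <= E0 * X.
  by apply: ler_wpM2l; [exact: ltW | lra].
lra.
Qed.

(* Markov's inequality applied to expR (- lam f) with lam = delta / 2. *)
Lemma chernoff_lower_tail n k (d : dist R n k) (f : orth n k -> R) (mu delta : R) :
  (forall S, 0 <= d S) -> 0 <= mu -> 0 < delta ->
  expectation d (fun S => expR (- (delta / 2) * f S))
    <= expR (- (delta / 2 - (delta / 2) ^+ 2) * mu) ->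
  prob d (fun S => f S <= (1 - delta) * mu) <= expR (- (mu * delta ^+ 2 / 8)).
Proof.
move=> d_ge0 mu_ge0 delta_gt0 mgf.
set lam := delta / 2; set a := (1 - delta) * mu.
apply: le_trans (_ : expR (lam * a) * expectation d (fun S => expR (- lam * f S)) <= _).
  rewrite /prob /expectation mulr_sumr big_mkcond /=; apply: ler_sum => S _.
  rewrite mulrCA; case: ifP => below; last by rewrite mulr_ge0 // mulr_ge0 ?expR_ge0.
  rewrite -{1}(mulr1 (d S)); apply: ler_wpM2l => //.
  rewrite -expRD -(expR0 R) ler_expR.
  have : 0 <= lam * (a - f S) by rewrite mulr_ge0 ?subr_ge0 // divr_ge0 // ltW.
  lra.
apply: le_trans (ler_wpM2l (expR_ge0 _) mgf) _.
rewrite -expRD ler_expR /a /lam.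
have : 0 <= mu * delta ^+ 2 by rewrite mulr_ge0 // sqr_ge0.
lra.
Qed.

End ExponentialEstimates.

Section DiminishingReturns.
Variables (R : realType) (n k : nat).
Implicit Types (f : orth n k -> R) (S T : orth n k).

Lemma updE S e v i : upd S e v i = if i == e then v else S i.
Proof. by rewrite ffunE. Qed.

Lemma upd_unassigned S t : S t = ord0 -> upd S t ord0 = S.
Proof. by move=> St; apply/ffunP => i; rewrite updE; case: eqP => // ->. Qed.

Lemma upd_comm T s t a b : s != t -> upd (upd T s a) t b = upd (upd T t b) s a.
Proof.
move=> st; apply/ffunP => i; rewrite !updE.
by case: (eqVneq i t) => [->|//]; rewrite eq_sym (negbTE st).
Qed.

Lemma diminishing_returns f S T t c :
  k_submodular f -> (forall i, T i != ord0 -> S i = T i) -> S t = ord0 ->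
  f (upd S t c) - f S <= f (upd T t c) - f T.
Proof.
move=> ksub ext St.
have Tt : T t = ord0 by case: (eqVneq (T t) ord0) => // /ext; rewrite St => ->.
case: (unliftP ord0 c) => [j ->|->]; last by rewrite !upd_unassigned // !subrr.
have j_assigned : lift ord0 j != ord0 :> 'I_k.+1 by rewrite eq_sym neq_lift.
have meetE : omeet (upd T t (lift ord0 j)) S = T.
  apply/ffunP => i; rewrite ffunE updE.
  case: (eqVneq i t) => [->|_]; first by rewrite St (negbTE j_assigned) Tt.
  case: (eqVneq (T i) ord0) => [->|Ti]; first by case: eqP.
  by rewrite (ext i Ti) eqxx.
have joinE : ojoin (upd T t (lift ord0 j)) S = upd S t (lift ord0 j).
  apply/ffunP => i; rewrite !ffunE.
  case: (eqVneq i t) => [->|_]; first by rewrite (negbTE j_assigned) St eqxx.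
  case: (eqVneq (T i) ord0) => [//|Ti].
  by rewrite (ext i Ti) (negbTE Ti) eqxx.
by have := ksub (upd T t (lift ord0 j)) S; rewrite meetE joinE; lra.
Qed.

Definition unit_marginals f : Prop :=
  forall S (e : 'I_n) (j : 'I_k), S e = ord0 -> 0 <= marginal f e j S <= 1.

Lemma increment_bounds f T t c :
  unit_marginals f -> T t = ord0 -> 0 <= f (upd T t c) - f T <= 1.
Proof.
move=> marg Tt; case: (unliftP ord0 c) => [j ->|->]; first exact: marg.
by rewrite upd_unassigned // subrr lexx ler01.
Qed.

End DiminishingReturns.

Lemma convex_comb_bounds (R : realType) k (p D : 'I_k.+1 -> R) (W : R) :
  (forall c, 0 <= p c) -> \sum_c p c = 1 -> (forall c, 0 <= D c <= W) ->
  0 <= \sum_c p c * D c <= W.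
Proof.
move=> p_ge0 p_sum1 D_bounds; apply/andP; split.
  by apply: sumr_ge0 => c _; case/andP: (D_bounds c) => D_ge0 _; rewrite mulr_ge0.
apply: le_trans (_ : \sum_c p c * W <= _).
  by apply: ler_sum => c _; case/andP: (D_bounds c) => _ D_le; rewrite ler_wpM2l.
by rewrite -mulr_suml p_sum1 mul1r.
Qed.

Section PartialRandomization.
Variables (R : realType) (n k : nat) (x : 'M[R]_(n, k)) (f : orth n k -> R).
Hypotheses (xP : in_P x) (ksub : k_submodular f) (marg : unit_marginals f).
Implicit Types (Q : {set 'I_n}) (T : orth n k).

Definition partial Q T : 'I_n -> 'I_k.+1 -> R :=
  fun i c => if i \in Q then xbar x i c else (T i == c)%:R.

Lemma partial_condition (g : orth n k -> R) Q T t : t \in Q ->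
  prodE g (partial Q T) = \sum_c xbar x t c * prodE g (partial (Q :\ t) (upd T t c)).
Proof.
move=> tQ; rewrite (prodE_condition g _ t); apply: eq_bigr => c _.
rewrite /partial tQ; congr (_ * _); apply: eq_prodE => i c'.
by rewrite /fix_row in_setD1 updE; case: (eqVneq i t).
Qed.

Lemma partial_set0 (g : orth n k -> R) T : prodE g (partial set0 T) = g T.
Proof. by rewrite -(prodE_point g T); apply: eq_prodE => i c; rewrite /partial in_set0. Qed.

Lemma partial_increment_bounds m Q T t c :
  #|Q| = m -> t \notin Q -> (forall i, i \in Q -> T i = ord0) -> T t = ord0 ->
  0 <= prodE f (partial Q (upd T t c)) - prodE f (partial Q T)
    <= f (upd T t c) - f T.
Proof.
elim: m Q T => [|m IH] Q T.
  move=> /eqP; rewrite cards_eq0 => /eqP -> _ _ Tt.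
  by rewrite !partial_set0 lexx andbT; case/andP: (increment_bounds c marg Tt).
move=> cardQ tQ TQ Tt.
have /card_gt0P [s sQ] : (0 < #|Q|)%N by rewrite cardQ.
have st : s != t by apply: contraNneq tQ => <-.
rewrite !(partial_condition _ _ sQ) -sumrB.
rewrite (eq_bigr (fun a => xbar x s a * (prodE f (partial (Q :\ s) (upd (upd T s a) t c))
                   - prodE f (partial (Q :\ s) (upd T s a))))); last first.
  by move=> a _; rewrite (@upd_comm _ _ T t s c a) 1?eq_sym // mulrBr.
apply: convex_comb_bounds => [a||a]; [exact: xbar_ge0 | exact: xbar_sum |].
have Tat : (upd T s a) t = ord0 by rewrite updE eq_sym (negbTE st).
have cardQ' : #|Q :\ s| = m by move: cardQ; rewrite (cardsD1 s) sQ add1n => -[].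
have tQ' : t \notin Q :\ s by rewrite in_setD1 negb_and tQ orbT.
have TaQ' i : i \in Q :\ s -> upd T s a i = ord0.
  by rewrite in_setD1 => /andP[iS iQ]; rewrite updE (negbTE iS) TQ.
case/andP: (IH _ _ cardQ' tQ' TaQ' Tat) => -> /le_trans; apply.
apply: diminishing_returns => // i Ti; rewrite updE; case: eqP => // iS.
by move: Ti; rewrite iS TQ // eqxx.
Qed.

Lemma partial_mgf_bound (lam cc : R) m Q T :
  0 <= lam -> 0 <= cc -> cc * (1 + lam) = lam ->
  #|Q| = m -> (forall i, i \in Q -> T i = ord0) ->
  prodE (fun S => expR (- lam * f S)) (partial Q T)
    <= expR (- cc * prodE f (partial Q T) + (cc - lam) * f T).
Proof.
move=> lam_ge0 cc_ge0 ccE; elim: m Q T => [|m IH] Q T.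
  move=> /eqP; rewrite cards_eq0 => /eqP -> _.
  by rewrite !partial_set0 ler_expR; lra.
move=> cardQ TQ.
have /card_gt0P [t tQ] : (0 < #|Q|)%N by rewrite cardQ.
have cardQ' : #|Q :\ t| = m by move: cardQ; rewrite (cardsD1 t) tQ add1n => -[].
have tQ' : t \notin Q :\ t by rewrite in_setD1 eqxx.
have Tt : T t = ord0 by exact: TQ.
have TQ' i : i \in Q :\ t -> T i = ord0.
  by rewrite in_setD1 => /andP[_ iQ]; exact: TQ.
have TcQ' c i : i \in Q :\ t -> upd T t c i = ord0.
  by rewrite in_setD1 => /andP[it iQ]; rewrite updE (negbTE it) TQ.
rewrite !(partial_condition _ _ tQ).
apply: le_trans (_ : \sum_c xbar x t c *
    expR (- cc * prodE f (partial (Q :\ t) (upd T t c)) + (cc - lam) * f (upd T t c))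
    <= _).
  apply: ler_sum => c _; apply: ler_wpM2l; first exact: xbar_ge0.
  exact: IH cardQ' (TcQ' c).
apply: (expR_average_step (h0 := prodE f (partial (Q :\ t) T))) => // [c||c|c|c].
- exact: xbar_ge0.
- exact: xbar_sum.
- by case/andP: (partial_increment_bounds c cardQ' tQ' TQ' Tt).
- by case/andP: (partial_increment_bounds c cardQ' tQ' TQ' Tt).
- by case/andP: (increment_bounds c marg Tt).
Qed.

Lemma product_mgf_bound (lam : R) :
  (forall S, 0 <= f S) -> 0 <= lam ->
  prodE (fun S => expR (- lam * f S)) (xbar x)
    <= expR (- (lam - lam ^+ 2) * prodE f (xbar x)).
Proof.
move=> f_ge0 lam_ge0.
set cc := lam / (1 + lam).
have cc_ge0 : 0 <= cc by rewrite divr_ge0 // addr_ge0.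
have ccE : cc * (1 + lam) = lam by rewrite mulfVK // gt_eqF // ltr_pwDl.
have cc_le_lam : cc <= lam by nra.
have cc_ge : lam - lam ^+ 2 <= cc by nra.
set Z : orth n k := [ffun => ord0].
have fullE g : prodE g (xbar x) = prodE g (partial setT Z).
  by apply: eq_prodE => i c; rewrite /partial in_setT.
have mu_ge0 : 0 <= prodE f (xbar x).
  by apply: prodE_ge0 => // i c; exact: xbar_ge0.
have := partial_mgf_bound lam_ge0 cc_ge0 ccE (erefl #|[set: 'I_n]|) (fun i _ => ffunE _ i).
rewrite -!fullE => /le_trans; apply; rewrite ler_expR.
by have := f_ge0 Z; nra.
Qed.

End PartialRandomization.

Unset Implicit Arguments.

Theorem mainTheorem9 (R : realType) (n k : nat) (f : orth n k -> R)
  (x : 'M[R]_(n, k)) (dec : seq (R * base n k)) (d : dist R n k) :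
  (1 <= k)%N ->
  (forall S, 0 <= f S) ->
  monotone f ->
  k_submodular f ->
  (forall (S : orth n k) (e : 'I_n) (j : 'I_k), S e = ord0 ->
      0 <= marginal f e j S <= 1) ->
  in_P x ->
  is_decomposition x dec ->
  swap_rounding_dist dec d ->
  let mu0 := multilinear_ext f x in
  mu0 <= expectation d f /\
  (forall delta : R, 0 < delta ->
     prob d (fun S => f S <= (1 - delta) * mu0)
       <= expR (- (mu0 * delta ^+ 2 / 8))).
Proof.
move=> _ f_ge0 _ ksub marg xP dec_ok rounding mu0.
have [d_ge0 dE] := swap_rounding_product dec_ok rounding.
have muE : mu0 = expectation d f by rewrite /mu0 multilinear_ext_prodE dE.
have mu_ge0 : 0 <= mu0 by rewrite /mu0 multilinear_ext_prodE prodE_ge0 // => i c; exact: xbar_ge0.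
split; first by rewrite muE.
move=> delta delta_gt0; apply: chernoff_lower_tail => //.
have lam_ge0 : 0 <= delta / 2 by rewrite divr_ge0 // ltW.
by rewrite dE /mu0 multilinear_ext_prodE; exact: product_mgf_bound.
Qed.
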